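(* Let $X\in\mathscr X(x,[0,T])$, $Y\in\mathscr X(y,[0,T])$, and let $\tau$ be a stopping time with $\tau\le T$. Then there exists a sequence $(\tau_n)$ of stopping times such that: $\tau\le\tau_n\le T$ for all $n$; on $\{\tau<T\}$ one has $\tau_n\downarrow\tau$ $\mathbb P$-a.s.; and on $\{\tau_n<T\}$ one has $\Delta X_{\tau_n}=\Delta Y_{\tau_n}=0$ $\mathbb P$-a.s.
   Context: Let $(\Omega,(\mathscr F_t)_{t\ge0},\mathscr F,\mathbb P)$ be a filtered probability space with right-continuous filtration and trivial $\mathscr F_0$, and $T>0$, $x,y\in\mathbb{R}$. $\mathscr X(z,[0,T])$ is the set of processes $(Z_t)_{t\ge0-}$ with $Z_{0-}=z$, $(Z_t)_{t\ge0}$ adapted, paths a.s. right-continuous and bounded, with finite and a.s. (uniformly) bounded total variation, and $Z_t=0$ a.s. for all $t\ge T$. $\Delta Z_t=Z_t-Z_{t-}$. *)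

From HB Require Import structures.
From mathcomp Require Import all_boot all_order all_algebra.
From mathcomp Require Import all_classical all_reals all_analysis.
Set Implicit Arguments. Unset Strict Implicit. Unset Printing Implicit Defensive.
Import Order.TTheory GRing.Theory Num.Theory numFieldNormedType.Exports.
Local Open Scope classical_set_scope.
Local Open Scope ring_scope.

Definition filtration {d} {Omega : measurableType d} {R : realType}
    (P : probability Omega R) (F : R -> set (set Omega)) : Prop :=
  [/\ (forall t, 0 <= t -> sigma_algebra setT (F t)),
      (forall t, 0 <= t -> F t `<=` measurable),
      (forall s t, 0 <= s -> s <= t -> F s `<=` F t),
      (forall t, 0 <= t -> (\bigcap_(s in `]t, +oo[) F s) `<=` F t) &
      (forall A, F 0 A -> P A = 0%E \/ P A = 1%E)].

(* Stopping time (here real-valued, i.e. finite; all stopping times in the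
   statement are bounded by T). *)
Definition stopping_time {d} {Omega : measurableType d} {R : realType}
    (F : R -> set (set Omega)) (tau : Omega -> R) : Prop :=
  (forall w, 0 <= tau w) /\
  (forall t, 0 <= t -> F t [set w | tau w <= t]).

(* A process (Z_t)_{t >= 0-}: Z_{0-} = z and Z : R -> Omega -> R gives Z_t for t >= 0
   (values at t < 0 are irrelevant). *)
Definition ext_path {Omega : Type} {R : realType} (z : R) (Z : R -> Omega -> R)
    (w : Omega) : R -> R :=
  fun s => if s < 0 then z else Z s w.

Definition left_val {Omega : Type} {R : realType} (z : R) (Z : R -> Omega -> R)
    (t : R) (w : Omega) : R :=
  if t <= 0 then z else lim ((fun s => Z s w) @ t^'-).

Definition jump {Omega : Type} {R : realType} (z : R) (Z : R -> Omega -> R)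
    (t : R) (w : Omega) : R :=
  Z t w - left_val z Z t w.

Definition procX {d} {Omega : measurableType d} {R : realType}
    (P : probability Omega R) (F : R -> set (set Omega))
    (z T : R) (Z : R -> Omega -> R) : Prop :=
  [/\
      (forall t, 0 <= t -> forall B : set R, measurable B -> F t (Z t @^-1` B)),
      {ae P, forall w, forall t, 0 <= t -> (fun s => Z s w) @ t^'+ --> Z t w},
      {ae P, forall w, exists M : R, forall t, 0 <= t -> `|Z t w| <= M},
      (* finite and a.s. uniformly bounded total variation on [0-, +oo) *)
      (exists K : R, {ae P, forall w, forall b : R,
          (total_variation (-1) b (ext_path z Z w) <= K%:E)%E}) &
      (forall t, T <= t -> {ae P, forall w, Z t w = 0})].

From HB Require Import structures.
From mathcomp Require Import all_boot all_order all_algebra.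
From mathcomp Require Import all_classical all_reals all_analysis.
From mathcomp Require Import lra measurable_realfun.
Import Order.TTheory GRing.Theory Num.Theory numFieldNormedType.Exports.
Local Open Scope classical_set_scope.
Local Open Scope ring_scope.
Set Implicit Arguments. Unset Strict Implicit. Unset Printing Implicit Defensive.

(* A path of bounded variation is a difference of nondecreasing functions, so
   it jumps only at countably many times.  Hence for almost every w only
   countably many shifts c make tau w + c a jump time of X or Y, and by Tonelli
   the event "tau + c is a jump time" is null for Lebesgue-almost every c.
   Choosing such shifts c_n in ]1/(n+2), 1/(n+1)[ gives
   tau_n := min (tau + c_n) T. *)

Lemma countable_setU (T : Type) (A B : set T) :
  countable A -> countable B -> countable (A `|` B).
Proof.
move=> cA cB.
have -> : A `|` B = \bigcup_(i in [set: bool]) (if i then A else B).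
  apply/seteqP; split => x.
  - by case=> h; [exists true|exists false].
  - by case=> -[] _ h; [left|right].
by apply: bigcup_countable => // -[].
Qed.

Lemma xsectionU (T1 T2 : Type) (A B : set (T1 * T2)) x :
  xsection (A `|` B) x = xsection A x `|` xsection B x.
Proof. by apply/seteqP; split => c; rewrite /xsection /= !inE. Qed.

Section one_sided_limits.
Context {R : realType}.
Implicit Types (f g : R -> R) (a b s : R).

Lemma rat_between a b : a < b -> exists q : rat, a < ratr q /\ ratr q < b.
Proof.
move=> ab.
have hne : `]a, b[%classic ((a + b) / 2) by rewrite /= in_itv /= !midf_lt.
have [r [/= + [q _ qr]]] :=
  @dense_rat R `]a, b[%classic (ex_intro _ _ hne) (itv_open _ _).
by rewrite -qr in_itv /= => /andP[h1 h2]; exists q.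
Qed.

Lemma near_at_left_interval (Q : R -> Prop) s : (\forall t \near s^'-, Q t) ->
  exists2 e, 0 < e & forall t, s - e < t -> t < s -> Q t.
Proof.
move=> /nbhs_ballP [e /= e0 he]; exists e => // t h1 h2.
apply: he => //=; rewrite /ball /= gtr0_norm ?subr_gt0 //.
by rewrite ltrBlDr addrC -ltrBlDr.
Qed.

Lemma near_at_right_interval (Q : R -> Prop) s : (\forall t \near s^'+, Q t) ->
  exists2 e, 0 < e & forall t, s < t -> t < s + e -> Q t.
Proof.
move=> /nbhs_ballP [e /= e0 he]; exists e => // t h1 h2.
apply: he => //=; rewrite /ball /= ltr0_norm ?subr_lt0 // opprB.
by rewrite ltrBlDl.
Qed.

Lemma nondecreasing_is_cvg_at_left_right g a b s :
  {in `[a, b] &, nondecreasing_fun g} -> a < s -> s < b ->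
  cvg (g x @[x --> s^'-]) /\ cvg (g x @[x --> s^'+]).
Proof.
move=> ndg ar rb; split.
  apply: nondecreasing_at_left_is_cvgr.
  - near=> t => x y xrs yrs xy; rewrite ndg//.
    + by apply: subset_itvW xrs; exact/ltW.
    + by apply: subset_itvW yrs; exact/ltW.
  - near=> x; exists (g s) => _ /= [t srx <-]; rewrite ndg//.
    + by apply: subset_itvW srx; exact/ltW.
    + by apply: subset_itv_oo_cc; rewrite in_itv/= ar.
    + by move: srx; rewrite in_itv/= => /andP[_ /ltW].
apply: nondecreasing_at_right_is_cvgr.
- near=> t => x y xrs yrs xy; rewrite ndg//.
  + by apply: subset_itvW xrs; exact/ltW.
  + by apply: subset_itvW yrs; exact/ltW.
- near=> x; exists (g s) => _ /= [t srx <-]; rewrite ndg//.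
  + by apply: subset_itv_oo_cc; rewrite in_itv/= ar.
  + by apply: subset_itvW srx; exact/ltW.
  + by move: srx; rewrite in_itv/= => /andP[/ltW].
Unshelve. all: by end_near. Qed.

Lemma bounded_variation_nondecreasing_diff f a b : a <= b ->
  bounded_variation a b f -> exists g h,
  [/\ {in `[a, b] &, nondecreasing_fun g},
      {in `[a, b] &, nondecreasing_fun h} & {in `[a, b], f =1 g \- h}].
Proof.
move=> ab bv; exists (fine \o pos_tv a f), (fine \o neg_tv a f); split.
- by apply: fine_neg_tv_nondecreasing; exact: bounded_variationN.
- exact: fine_neg_tv_nondecreasing.
- exact: bounded_variation_pos_neg_tvE.
Qed.

Lemma total_variation_le_bounded_variation f a b K :
  a <= b -> (total_variation a b f <= K%:E)%E -> bounded_variation a b f.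
Proof.
move=> ab tv; apply/bounded_variationP => //.
rewrite ge0_fin_numE; last exact: total_variation_ge0.
exact: le_lt_trans tv (ltry K).
Qed.

(* A jump of [f] at [s] seen through rational points and a rational size: this
   countable description makes the set of jump times measurable. *)
Definition oscillates f s := exists e : rat, (0 : R) < ratr e /\
  forall m : nat, exists q1 q2 : rat,
    [/\ s < ratr q1, ratr q1 < s + m.+1%:R^-1,
        s - m.+1%:R^-1 < ratr q2, ratr q2 < s &
        ratr e <= `|f (ratr q1) - f (ratr q2)| ].

Lemma oscillates_of_jump f s : cvg (f x @[x --> s^'-]) ->
  f x @[x --> s^'+] --> f s -> f s != lim (f x @[x --> s^'-]) ->
  oscillates f s.
Proof.
move=> cl cr ne.
set L := lim (f x @[x --> s^'-]) in ne.
have d0 : 0 < `|f s - L| / 3 by rewrite divr_gt0 // normr_gt0 subr_eq0.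
have [e [e0 e1]] := rat_between d0.
exists e; split => // m.
have [d1 d10 h1] := near_at_left_interval ((cvgrPdist_lt _ _).1 cl _ d0).
have [d2 d20 h2] := near_at_right_interval ((cvgrPdist_lt _ _).1 cr _ d0).
have mp : 0 < m.+1%:R^-1 :> R by rewrite invr_gt0 ltr0n.
set mi := m.+1%:R^-1 : R.
set d2' := Num.min d2 mi; set d1' := Num.min d1 mi.
have := lexx d2'; rewrite {2}/d2' le_min => /andP[d2d2 d2mi].
have := lexx d1'; rewrite {2}/d1' le_min => /andP[d1d1 d1mi].
have d2'0 : 0 < d2' by rewrite lt_min d20 mp.
have d1'0 : 0 < d1' by rewrite lt_min d10 mp.
have [q1 [a1 b1]] : exists q : rat, s < ratr q /\ ratr q < s + d2'.
  by apply: rat_between; rewrite ltrDl.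
have [q2 [a2 b2]] : exists q : rat, s - d1' < ratr q /\ ratr q < s.
  by apply: rat_between; rewrite gtrDl oppr_lt0.
exists q1, q2; split => //; try lra.
have hq1 := h2 (ratr q1) a1 ltac:(lra).
have hq2 := h1 (ratr q2) ltac:(lra) b2.
rewrite -/L in hq2.
have tri : `|f s - L| <= `|f s - f (ratr q1)| +
    `|f (ratr q1) - f (ratr q2)| + `|L - f (ratr q2)|.
  have -> : f s - L = (f s - f (ratr q1)) + (f (ratr q1) - f (ratr q2))
                      - (L - f (ratr q2)) by lra.
  by apply: (le_trans (ler_normB _ _)); rewrite lerD2r; exact: ler_normD.
set D := `|f s - L| in d0 e1 hq1 hq2 tri *.
set N := `|f (ratr q1) - f (ratr q2)| in tri *.
set A1 := `|f s - f (ratr q1)| in hq1 tri.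
set A2 := `|L - f (ratr q2)| in hq2 tri.
lra.
Qed.

End one_sided_limits.

Section nondecreasing_difference.
Context {R : realType} {a b : R} {f g h : R -> R}.
Hypotheses (ndg : {in `[a, b] &, nondecreasing_fun g})
  (ndh : {in `[a, b] &, nondecreasing_fun h}) (fE : {in `[a, b], f =1 g \- h}).

Lemma nondecreasing_diff_cvg_at_left s : a < s -> s < b ->
  f x @[x --> s^'-] --> lim (g x @[x --> s^'-]) - lim (h x @[x --> s^'-]).
Proof.
move=> as_ sb; have [cg _] := nondecreasing_is_cvg_at_left_right ndg as_ sb.
have [ch _] := nondecreasing_is_cvg_at_left_right ndh as_ sb.
apply: cvg_trans; last exact: cvgB cg ch.
apply: near_eq_cvg; near=> y; rewrite fE //= in_itv /=; apply/andP; split.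
  by near: y; apply: nbhs_left_ge.
by apply/ltW/(lt_trans _ sb); near: y; apply: nbhs_left_lt.
Unshelve. all: by end_near. Qed.

Lemma nondecreasing_diff_cvg_at_right s : a < s -> s < b ->
  f x @[x --> s^'+] --> lim (g x @[x --> s^'+]) - lim (h x @[x --> s^'+]).
Proof.
move=> as_ sb; have [_ cg] := nondecreasing_is_cvg_at_left_right ndg as_ sb.
have [_ ch] := nondecreasing_is_cvg_at_left_right ndh as_ sb.
apply: cvg_trans; last exact: cvgB cg ch.
apply: near_eq_cvg; near=> y; rewrite fE //= in_itv /=; apply/andP; split.
  by apply/ltW/(lt_trans as_); near: y; apply: nbhs_right_gt.
by apply/ltW; near: y; apply: nbhs_right_lt.
Unshelve. all: by end_near. Qed.

Lemma nondecreasing_diff_oscillates_discontinuity s : a < s -> s < b ->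
  oscillates f s -> discontinuity g s \/ discontinuity h s.
Proof.
move=> as_ sb [e [e0 he]]; apply: contrapT => /not_orP[dg dh].
have [cgl cgr] := nondecreasing_is_cvg_at_left_right ndg as_ sb.
have [chl chr] := nondecreasing_is_cvg_at_left_right ndh as_ sb.
have eg : lim (g x @[x --> s^'-]) = lim (g x @[x --> s^'+]).
  by apply: contrapT => ne; apply: dg; split => //; exact/eqP.
have eh : lim (h x @[x --> s^'-]) = lim (h x @[x --> s^'+]).
  by apply: contrapT => ne; apply: dh; split => //; exact/eqP.
set L := lim (g x @[x --> s^'+]) - lim (h x @[x --> s^'+]).
have fl : f x @[x --> s^'-] --> L.
  by rewrite /L -eg -eh; exact: nondecreasing_diff_cvg_at_left.
have fr : f x @[x --> s^'+] --> L by exact: nondecreasing_diff_cvg_at_right.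
have e2 : 0 < ratr e / 2 :> R by rewrite divr_gt0.
have [d1 d10 h1] := near_at_left_interval ((cvgrPdist_lt _ _).1 fl _ e2).
have [d2 d20 h2] := near_at_right_interval ((cvgrPdist_lt _ _).1 fr _ e2).
have [m hm] : exists m : nat, m.+1%:R^-1 < Num.min d1 d2.
  exists (Num.truncn (Num.min d1 d2)^-1).
  by rewrite invf_plt ?posrE ?lt_min ?d10 ?d20 // truncnS_gt.
have [q1 [q2 [a1 b1 a2 b2 le12]]] := he m.
move: hm; rewrite lt_min => /andP[m1 m2].
have hq1 : `|L - f (ratr q1)| < ratr e / 2.
  by apply: h2 a1 (lt_trans b1 _); rewrite ltrD2l.
have hq2 : `|L - f (ratr q2)| < ratr e / 2.
  by apply: h1 (le_lt_trans _ a2) b2; rewrite lerD2l lerN2 ltW.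
have : `|f (ratr q1) - f (ratr q2)| < ratr e.
  have -> : f (ratr q1) - f (ratr q2) = (L - f (ratr q2)) - (L - f (ratr q1)).
    by lra.
  apply: (le_lt_trans (ler_normB _ _)).
  by rewrite (splitr (ratr e)); apply: ltrD.
by rewrite ltNge le12.
Qed.

End nondecreasing_difference.

Section jump_times.
Context {R : realType}.

Lemma countable_oscillating_shifts (f : R -> R) a b t : a <= b ->
  bounded_variation a b f ->
  countable [set c | a < t + c /\ t + c < b /\ oscillates f (t + c)].
Proof.
move=> ab bv.
have [g [h [ndg ndh fE]]] := bounded_variation_nondecreasing_diff ab bv.
set D := [set x | x \in (`]a, b[) /\ discontinuity g x] `|`
         [set x | x \in (`]a, b[) /\ discontinuity h x].
have cD : countable D by apply: countable_setU; exact: discontinuity_countable.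
apply: (sub_countable _ cD).
apply: (card_le_trans _ (card_image_le (fun x => x - t) D)).
apply: subset_card_le => c [h1 [h2 ho]].
exists (t + c); last by rewrite addrC addKr.
have tin : t + c \in `]a, b[ by rewrite in_itv /= h1 h2.
have [] := nondecreasing_diff_oscillates_discontinuity ndg ndh fE h1 h2 ho.
  by left.
by right.
Qed.

Lemma jump_eq0_of_not_oscillates {Omega : Type} (z : R) (Z : R -> Omega -> R)
    w s b : 0 < s -> s < b ->
  (forall t, 0 <= t -> (fun u => Z u w) @ t^'+ --> Z t w) ->
  bounded_variation (-1) b (ext_path z Z w) ->
  ~ oscillates (ext_path z Z w) s -> jump z Z s w = 0.
Proof.
move=> s0 sb rc bv no.
set f := ext_path z Z w.
have m1s : -1 < s by apply: lt_trans s0; rewrite ltrN10.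
have [g [h [ndg ndh fE]]] :=
  bounded_variation_nondecreasing_diff (ltW (lt_trans m1s sb)) bv.
have cl : cvg (f x @[x --> s^'-]).
  exact: cvgP (nondecreasing_diff_cvg_at_left ndg ndh fE m1s sb).
have eql : {near s^'-, f =1 (fun u => Z u w)}.
  near=> u; rewrite /f /ext_path ifF //; apply/negbTE; rewrite -leNgt.
  by apply: ltW; near: u; apply: nbhs_left_gt.
have eqr : {near s^'+, f =1 (fun u => Z u w)}.
  near=> u; rewrite /f /ext_path ifF //; apply/negbTE; rewrite -leNgt.
  by apply: ltW; apply: lt_trans s0 _; near: u; apply: nbhs_right_gt.
have fs : f s = Z s w.
  by rewrite /f /ext_path ifF //; apply/negbTE; rewrite -leNgt ltW.
have cr : f x @[x --> s^'+] --> f s.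
  rewrite fs; apply: cvg_trans (rc s (ltW s0)).
  by apply: near_eq_cvg; near=> u; rewrite (near eqr u).
have LE : lim (f x @[x --> s^'-]) = lim ((fun u => Z u w) @ s^'-).
  congr lim; apply/seteqP; split; apply: near_eq_cvg => //.
  by near=> u; rewrite (near eql u).
rewrite /jump /left_val ifF; last by apply/negbTE; rewrite -ltNge.
apply/eqP; rewrite subr_eq0; apply/negPn/negP => ne.
by apply: no; apply: oscillates_of_jump => //; move: ne; rewrite -fs -LE.
Unshelve. all: by end_near. Qed.

End jump_times.

Section measurability.
Context {d} {T : measurableType d} {R : realType}.

Lemma measurable_set_ltr (u v : T -> R) :
  measurable_fun setT u -> measurable_fun setT v -> measurable [set x | u x < v x].
Proof.
move=> mu mv.
by rewrite -[X in measurable X]setTI; exact: measurable_fun_ltr.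
Qed.

Lemma measurable_set_ler (u v : T -> R) :
  measurable_fun setT u -> measurable_fun setT v -> measurable [set x | u x <= v x].
Proof.
move=> mu mv.
by rewrite -[X in measurable X]setTI; exact: measurable_fun_ler.
Qed.

Lemma measurable_oscillates (u : T -> R) (phi : T -> R -> R) :
  measurable_fun setT u -> (forall q, measurable_fun setT (phi^~ q)) ->
  measurable [set x | oscillates (phi x) (u x)].
Proof.
move=> mu mphi.
pose g q1 q2 x := `|phi x (ratr q1) - phi x (ratr q2)|.
have mg q1 q2 : measurable_fun setT (g q1 q2).
  by apply: measurableT_comp => //; exact: measurable_funB.
have -> : [set x | oscillates (phi x) (u x)] =
  \bigcup_(e : rat) ([set x : T | (0 : R) < ratr e] `&`
    \bigcap_(m : nat) \bigcup_(q1 : rat) \bigcup_(q2 : rat)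
      ([set x | u x < ratr q1] `&` [set x | ratr q1 < u x + m.+1%:R^-1] `&`
       [set x | u x - m.+1%:R^-1 < ratr q2] `&` [set x | ratr q2 < u x] `&`
       [set x | ratr e <= g q1 q2 x])).
  apply/seteqP; split => x.
  - move=> [e [e0 he]]; exists e => //; split => // m _.
    have [q1 [q2 [a1 a2 a3 a4 a5]]] := he m.
    by exists q1 => //; exists q2.
  - move=> [e _ [e0 he]]; exists e; split => // m.
    have [q1 _ [q2 _ [[[[a1 a2] a3] a4] a5]]] := he m I.
    by exists q1, q2; split.
apply: bigcupT_measurable_rat => e; apply: measurableI.
  by apply: measurable_set_ltr => //; exact: measurable_cst.
apply: bigcapT_measurable => m.
apply: bigcupT_measurable_rat => q1; apply: bigcupT_measurable_rat => q2.
repeat apply: measurableI.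
- by apply: measurable_set_ltr => //; exact: measurable_cst.
- by apply: measurable_set_ltr; [exact: measurable_cst|exact: measurable_funD].
- by apply: measurable_set_ltr; [exact: measurable_funB|exact: measurable_cst].
- by apply: measurable_set_ltr => //; exact: measurable_cst.
- by apply: measurable_set_ler => //; exact: measurable_cst.
Qed.

End measurability.

Section oscillation_set.
Context {d} {Omega : measurableType d} {R : realType}.
Variables (tau : Omega -> R) (T z : R) (Z : R -> Omega -> R).

Definition oscillation_set : set (Omega * R) :=
  [set p | 0 < tau p.1 + p.2 /\ tau p.1 + p.2 < T /\
           oscillates (ext_path z Z p.1) (tau p.1 + p.2)].

Lemma measurable_oscillation_set : measurable_fun setT tau ->
  (forall t, 0 <= t -> measurable_fun setT (Z t)) -> measurable oscillation_set.
Proof.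
move=> mtau mZ.
pose s (p : Omega * R) := tau p.1 + p.2.
have ms : measurable_fun setT s.
  exact: measurable_funD (measurableT_comp mtau measurable_fst) measurable_snd.
have mpath q : measurable_fun setT (fun p : Omega * R => ext_path z Z p.1 q).
  have [q0|q0] := boolP (q < 0).
    rewrite (_ : (fun p => _) = fun=> z); first exact: measurable_cst.
    by apply: funext => p; rewrite /ext_path q0.
  rewrite (_ : (fun p => _) = Z q \o fst).
    by apply: measurableT_comp measurable_fst; apply: mZ; rewrite leNgt.
  by apply: funext => p; rewrite /ext_path (negbTE q0).
have -> : oscillation_set = [set p | 0 < s p] `&` [set p | s p < T] `&`
    [set p | oscillates (ext_path z Z p.1) (s p)].
  by apply/seteqP; split => p /=; [move=> [? [? ?]] | move=> [[? ?] ?]].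
apply: measurableI; last exact: measurable_oscillates.
by apply: measurableI; apply: measurable_set_ltr => //; exact: measurable_cst.
Qed.

End oscillation_set.

Section null_sections.
Context {d} {Omega : measurableType d} {R : realType} (P : probability Omega R).

Lemma exists_null_ysection (S : set (Omega * R)) : measurable S ->
  {ae P, forall w, countable (xsection S w)} ->
  forall a b : R, a < b -> exists c, a < c /\ c < b /\ P (ysection S c) = 0%E.
Proof.
move=> mS cS a b ab.
set A := S `&` (setT `*` `]a, b[%classic).
have mA : measurable A.
  by apply: measurableI => //; apply: measurableX => //; exact: measurable_itv.
have := @indic_fubini_tonelli _ _ _ _ R P (@lebesgue_measure R) A mA.
have FE := indic_fubini_tonelli_FE (@lebesgue_measure R) mA.
have GE := indic_fubini_tonelli_GE P mA.
have mG := indic_measurable_fun_fubini_tonelli_G P mA.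
set F := fubini_F _ _ in FE *; set G := fubini_G _ _ in GE mG *.
have -> : (\int[P]_x F x = \int[P]_x (cst 0%E x))%E.
  apply: ae_eq_integral => //.
    exact: indic_measurable_fun_fubini_tonelli_F.
  apply: filterS cS => w cw _; rewrite FE /=.
  apply: countable_lebesgue_measure0.
  apply: (sub_countable _ cw); apply: subset_card_le => c.
  by rewrite /xsection /= !inE => -[].
rewrite integral0 => /esym G0.
have G0' : (\int[lebesgue_measure]_x `|G x| = 0)%E.
  rewrite -G0; apply: eq_integral => c _; rewrite gee0_abs //.
  by rewrite GE /=; exact: measure_ge0.
have [N [mN N0 sN]] := (ae_eq_integral_abs lebesgue_measure measurableT mG).1 G0'.
apply: contrapT => hc.
have sub : `]a, b[%classic `<=` N.
  move=> c /=; rewrite in_itv /= => /andP[ac cb]; apply: sN => /= hG.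
  apply: hc; exists c; split => //; split => //.
  have := hG I; rewrite GE /= => <-; congr (P _).
  apply/seteqP; split => w; rewrite /ysection /= !inE.
  - by move=> h; split => //; split => //=; rewrite in_itv /= ac cb.
  - by move=> [].
have : (lebesgue_measure (`]a, b[%classic : set R) <= 0)%E.
  rewrite -N0; apply: (@le_measure _ _ _ lebesgue_measure) sub;
    by rewrite inE //; exact: measurable_itv.
by rewrite lebesgue_measure_itv /= lte_fin ab -EFinB lee_fin subr_le0 leNgt ab.
Qed.

Lemma exists_shifts_ae_notin_ysection (S : set (Omega * R)) : measurable S ->
  {ae P, forall w, countable (xsection S w)} ->
  exists c : nat -> R, [/\ (forall n, 0 < c n), nonincreasing_seq c,
    c @ \oo --> 0 & forall n, {ae P, forall w, ~ ysection S (c n) w}].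
Proof.
move=> mS cS.
have : forall n : nat, exists c : R,
    (n.+2%:R^-1 < c /\ c < n.+1%:R^-1) /\ P (ysection S c) = 0%E.
  move=> n; have [|c [h1 [h2 h3]]] := exists_null_ysection mS cS
    (a := n.+2%:R^-1) (b := n.+1%:R^-1); last by exists c.
  by rewrite ltf_pV2 ?posrE ?ltr0n // ltr_nat.
move=> /choice [c hc].
have c0 n : 0 < c n by apply: lt_trans (hc n).1.1; rewrite invr_gt0 ltr0n.
exists c; split => //.
- move=> n m; rewrite leq_eqVlt => /orP[/eqP->//|nm].
  apply/ltW; apply: (lt_trans (hc m).1.2); apply: le_lt_trans (hc n).1.1.
  by rewrite lef_pV2 ?posrE ?ltr0n // ler_nat.
- apply: (@squeeze_cvgr _ _ _ _ (cst 0) harmonic); last 2 first.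
  + exact: cvg_cst.
  + exact: cvg_harmonic.
  by near=> n; rewrite /harmonic /= (ltW (c0 n)) (ltW (hc n).1.2).
- move=> n; exists (ysection S (c n)); split => //.
  + exact: measurable_ysection.
  + exact: (hc n).2.
  + by move=> w /= /contrapT.
Unshelve. all: by end_near. Qed.

End null_sections.

Lemma min_shift_nonincreasing_cvg {R : realType} (a T : R) (c : nat -> R) :
  a <= T -> (forall n, 0 <= c n) -> nonincreasing_seq c -> c @ \oo --> 0 ->
  nonincreasing_seq (fun n => Num.min (a + c n) T) /\
  (fun n => Num.min (a + c n) T) @ \oo --> a.
Proof.
move=> aT c0 cdec c_cvg; split.
  move=> n m nm /=; rewrite le_min !ge_min lexx !orbT !andbT.
  by rewrite lerD2l cdec.
apply: (@squeeze_cvgr _ _ _ _ (cst a) (fun n => a + c n)).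
- by near=> n; rewrite /= le_min aT lerDl c0 /= ge_min lexx.
- exact: cvg_cst.
- by rewrite -[X in _ --> X]addr0; apply: cvgD => //; exact: cvg_cst.
Unshelve. all: by end_near. Qed.

Section adapted_processes.
Context {d} {Omega : measurableType d} {R : realType} (P : probability Omega R)
  (F : R -> set (set Omega)).
Hypothesis FP : filtration P F.

Lemma stopping_time_measurable (tau : Omega -> R) :
  stopping_time F tau -> measurable_fun setT tau.
Proof.
case: FP => _ Fm _ _ _ [tau0 tauF].
apply: (measurability _ (measurable_realfun.RGenInftyO.measurableE R)) => //.
move=> _ [_ [x ->] <-]; rewrite setTI.
have -> : tau @^-1` `]-oo, x[ = \bigcup_n [set w | tau w <= x - n.+1%:R^-1].
  apply/seteqP; split => w /=.
  - rewrite in_itv /= => tx.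
    have [n nh] : exists n : nat, n.+1%:R^-1 < x - tau w.
      exists (Num.truncn (x - tau w)^-1).
      by rewrite invf_plt ?posrE ?subr_gt0// truncnS_gt.
    by exists n => //=; rewrite lerBrDr -lerBrDl ltW.
  - move=> [n _ /=] h; rewrite in_itv /=.
    by apply: (le_lt_trans h); rewrite ltrBlDr ltrDl invr_gt0 ltr0n.
apply: bigcupT_measurable => n.
have [h|h] := leP 0 (x - n.+1%:R^-1); first exact: (Fm _ h _ (tauF _ h)).
rewrite (_ : [set w | _] = set0) //.
apply/seteqP; split => w //= hw.
by have := le_trans (tau0 w) hw; rewrite leNgt h.
Qed.

Lemma stopping_time_min_shift (tau : Omega -> R) (c T : R) :
  stopping_time F tau -> 0 <= c -> 0 <= T ->
  stopping_time F (fun w => Num.min (tau w + c) T).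
Proof.
case: FP => sF _ Fmono _ _ [tau0 tauF] c0 T0; split.
  by move=> w; rewrite le_min T0 andbT addr_ge0.
move=> t t0; have [Tt|tT] := leP T t.
  rewrite (_ : [set w | _] = setT); last first.
    by apply/seteqP; split => // w _; rewrite /= ge_min Tt orbT.
  by have [F0 FC _] := sF t t0; rewrite -(setD0 setT); exact: FC F0.
rewrite (_ : [set w | _] = [set w | tau w <= t - c]); last first.
  by apply/seteqP; split => w; rewrite /= ge_min (leNgt T t) tT orbF lerBrDr.
have [h|h] := leP 0 (t - c).
  by apply: (Fmono (t - c) t h); [rewrite lerBlDr lerDl | exact: tauF].
rewrite (_ : [set w | _] = set0); first by have [] := sF t t0.
apply/seteqP; split => w //= hw.
by have := le_trans (tau0 w) hw; rewrite leNgt h.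
Qed.

Lemma procX_measurable z T (Z : R -> Omega -> R) : procX P F z T Z ->
  forall t, 0 <= t -> measurable_fun setT (Z t).
Proof.
case: FP => _ Fm _ _ _ [adZ _ _ _ _] t t0 _ B mB.
by rewrite setTI; exact: Fm _ t0 _ (adZ t t0 B mB).
Qed.

Lemma ae_countable_oscillation_xsection (tau : Omega -> R) T z
    (Z : R -> Omega -> R) :
  0 <= T -> procX P F z T Z ->
  {ae P, forall w, countable (xsection (oscillation_set tau T z Z) w)}.
Proof.
move=> T0 [_ _ _ [K tvZ] _]; apply: filterS tvZ => w tvw.
have m1T : -1 <= T by apply: le_trans T0; rewrite lerN10.
have bv := total_variation_le_bounded_variation m1T (tvw T).
apply: sub_countable (countable_oscillating_shifts (tau w) m1T bv).
apply: subset_card_le => c; rewrite /xsection /= inE => -[c0 [cT co]].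
by split => //; apply: lt_trans c0; rewrite ltrN10.
Qed.

Lemma ae_jump_eq0_at_shift (tau : Omega -> R) T z (Z : R -> Omega -> R) c
    (S : set (Omega * R)) :
  procX P F z T Z -> (forall w, 0 <= tau w) -> 0 < c ->
  oscillation_set tau T z Z `<=` S -> {ae P, forall w, ~ ysection S c w} ->
  {ae P, forall w, tau w + c < T -> jump z Z (tau w + c) w = 0}.
Proof.
move=> [_ rcZ _ [K tvZ] _] tau0 c0 oS nS.
apply: filterS3 rcZ tvZ nS => w rcw tvw nSw sT.
have s0 : 0 < tau w + c by rewrite ltr_pwDr.
have m1T : -1 <= T by apply/ltW/(lt_trans _ (lt_trans s0 sT)); rewrite ltrN10.
apply: (jump_eq0_of_not_oscillates s0 sT rcw).
  exact: total_variation_le_bounded_variation m1T (tvw T).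
by move=> ow; apply: nSw; rewrite /ysection /= inE; apply: oS.
Qed.

End adapted_processes.

Unset Implicit Arguments.

Theorem lemmaB1 (d : measure_display) (Omega : measurableType d) (R : realType)
    (P : probability Omega R) (F : R -> set (set Omega)) (T x y : R)
    (X Y : R -> Omega -> R) (tau : Omega -> R) :
  0 < T -> filtration P F ->
  procX P F x T X -> procX P F y T Y ->
  stopping_time F tau -> (forall w, tau w <= T) ->
  exists taun : nat -> Omega -> R,
    [/\ (forall n, stopping_time F (taun n)),
        (forall n w, tau w <= taun n w <= T),
        {ae P, forall w, tau w < T ->
            nonincreasing_seq (fun n => taun n w) /\
            (fun n => taun n w) @ \oo --> tau w} &
        (forall n, {ae P, forall w, taun n w < T ->
            jump x X (taun n w) w = 0 /\ jump y Y (taun n w) w = 0})].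
Proof.
move=> T0 FP PX PY st tauT.
have mtau := stopping_time_measurable FP st.
pose S := oscillation_set tau T x X `|` oscillation_set tau T y Y.
have mS : measurable S.
  apply: measurableU.
    exact: measurable_oscillation_set mtau (procX_measurable FP PX).
  exact: measurable_oscillation_set mtau (procX_measurable FP PY).
have cS : {ae P, forall w, countable (xsection S w)}.
  apply: filterS2 (ae_countable_oscillation_xsection tau (ltW T0) PX)
    (ae_countable_oscillation_xsection tau (ltW T0) PY) => w cX cY.
  by rewrite xsectionU; exact: countable_setU.
have [c [c0 cdec c_cvg nS]] := exists_shifts_ae_notin_ysection mS cS.
exists (fun n w => Num.min (tau w + c n) T); split.
- by move=> n; apply: (stopping_time_min_shift FP st); rewrite ltW ?c0.
- by move=> n w; rewrite le_min ge_min lexx orbT tauT lerDl (ltW (c0 n)).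
- apply: aeW => w /ltW tw; apply: min_shift_nonincreasing_cvg => // n.
  exact: ltW (c0 n).
- move=> n; apply: filterS2
    (ae_jump_eq0_at_shift PX st.1 (c0 n) (@subsetUl _ _ _) (nS n))
    (ae_jump_eq0_at_shift PY st.1 (c0 n) (@subsetUr _ _ _) (nS n)) => w jX jY.
  rewrite gt_min ltxx orbF => sT; rewrite min_l; last exact: ltW.
  by split; [exact: jX | exact: jY].
Qed.
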